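(* Let $0<q<1$. For complex numbers $\alpha,a,b,c$ with $\mathrm{Re}(c-a-b)>0$, and such that every $q^2$-gamma value occurring below is evaluated at a point that is not a non-positive integer, we have \[ \sum_{n=0}^{\infty}\frac{(\alpha|q^{2})_{a+n}\,(1-\alpha|q^{2})_{b+n}}{[n]_{q^{2}}!\,\Gamma_{q^{2}}(c+n+1)}\,q^{2(c-a-b)n} =\frac{(\alpha|q^{2})_{a}\,(1-\alpha|q^{2})_{b}\,\Gamma_{q^{2}}(c-a-b)}{(1-\alpha|q^{2})_{c-a}\,(\alpha|q^{2})_{c-b}}\;q^{-\alpha(\alpha-1)}\,\frac{\sin_{q}(\pi\alpha)}{\pi_{q}}. \]
   Context: Let $0<q<1$ and write $q^{x}=e^{x\log q}$ for complex $x$. Set $(z;q)_\infty=\prod_{k\ge0}(1-zq^k)$ and $(z_1,\dots,z_m;q)_\infty=\prod_j (z_j;q)_\infty$. The $q$-gamma function is $\Gamma_{q}(x)=\frac{(q;q)_\infty}{(q^{x};q)_\infty}(1-q)^{1-x}$; we use it with base $q^2$: $\Gamma_{q^2}(x)=\frac{(q^2;q^2)_\infty}{(q^{2x};q^2)_\infty}(1-q^2)^{1-x}$. For complex $x,\alpha$, the general $q$-shifted factorial is $(x|q^2)_\alpha=\Gamma_{q^2}(x+\alpha)/\Gamma_{q^2}(x)$. The $q$-integer is $[z]_{q^2}=\frac{1-q^{2z}}{1-q^2}$, and $[0]_{q^2}!=1$, $[n]_{q^2}!=\prod_{k=1}^n[k]_{q^2}$. Gosper's $q$-analogues: $\sin_q(\pi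 x)=q^{(x-1/2)^2}\frac{(q^{2-2x};q^2)_\infty(q^{2x};q^2)_\infty}{(q;q^2)_\infty^2}$ and $\pi_q=(1-q^2)q^{1/4}\frac{(q^2;q^2)_\infty^2}{(q;q^2)_\infty^2}$. *)

From Stdlib Require Import Reals ClassicalEpsilon.
Open Scope R_scope.

Record Cx := Cmk { Re : R; Im : R }.

Definition RtoC (x : R) : Cx := Cmk x 0.
Definition Cx0 : Cx := RtoC 0.
Definition Cx1 : Cx := RtoC 1.
Definition Cadd (z w : Cx) : Cx := Cmk (Re z + Re w) (Im z + Im w).
Definition Copp (z : Cx) : Cx := Cmk (- Re z) (- Im z).
Definition Csub (z w : Cx) : Cx := Cadd z (Copp w).
Definition Cmul (z w : Cx) : Cx :=
  Cmk (Re z * Re w - Im z * Im w) (Re z * Im w + Im z * Re w).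
(* inverse; Cinv 0 = 0 by the usual total convention *)
Definition Cinv (z : Cx) : Cx :=
  let d := Re z * Re z + Im z * Im z in Cmk (Re z / d) (- Im z / d).
Definition Cdiv (z w : Cx) : Cx := Cmul z (Cinv w).
Definition Cexp (z : Cx) : Cx := Cmk (exp (Re z) * cos (Im z)) (exp (Re z) * sin (Im z)).

(* convergence of complex sequences (componentwise = in modulus) *)
Definition Ccv (u : nat -> Cx) (l : Cx) : Prop :=
  Un_cv (fun n => Re (u n)) (Re l) /\ Un_cv (fun n => Im (u n)) (Im l).
(* the limit (meaningful whenever the sequence converges) *)
Definition Clim (u : nat -> Cx) : Cx := epsilon (inhabits Cx0) (fun l => Ccv u l).

Fixpoint Cprod (N : nat) (f : nat -> Cx) : Cx :=
  match N with O => Cx1 | S n => Cmul (Cprod n f) (f n) end.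
Fixpoint Csum (N : nat) (f : nat -> Cx) : Cx :=
  match N with O => Cx0 | S n => Cadd (Csum n f) (f n) end.

Definition qpow (q : R) (x : Cx) : Cx := Cexp (Cmul (RtoC (ln q)) x).

Definition qpoch_inf (z : Cx) (p : R) : Cx :=
  Clim (fun N => Cprod N (fun k => Csub Cx1 (Cmul z (RtoC (p ^ k))))).

Definition qGamma2 (q : R) (x : Cx) : Cx :=
  Cmul (Cdiv (qpoch_inf (RtoC (q ^ 2)) (q ^ 2))
             (qpoch_inf (qpow q (Cmul (RtoC 2) x)) (q ^ 2)))
       (qpow (1 - q ^ 2) (Csub Cx1 x)).

(* (x|q^2)_alpha = Gamma_{q^2}(x+alpha) / Gamma_{q^2}(x) *)
Definition qshift2 (q : R) (x alpha : Cx) : Cx :=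
  Cdiv (qGamma2 q (Cadd x alpha)) (qGamma2 q x).

Fixpoint qfact2 (q : R) (n : nat) : R :=
  match n with
  | O => 1
  | S m => qfact2 q m * ((1 - q ^ (2 * S m)) / (1 - q ^ 2))
  end.

(* Gosper's sin_q(pi x) *)
Definition sin_q (q : R) (x : Cx) : Cx :=
  Cdiv (Cmul (qpow q (Cmul (Csub x (RtoC (1/2))) (Csub x (RtoC (1/2)))))
             (Cmul (qpoch_inf (qpow q (Csub (RtoC 2) (Cmul (RtoC 2) x))) (q ^ 2))
                   (qpoch_inf (qpow q (Cmul (RtoC 2) x)) (q ^ 2))))
       (Cmul (qpoch_inf (RtoC q) (q ^ 2)) (qpoch_inf (RtoC q) (q ^ 2))).

(* Gosper's pi_q *)
Definition pi_q (q : R) : Cx :=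
  Cdiv (Cmul (RtoC ((1 - q ^ 2) * Rpower q (1/4)))
             (Cmul (qpoch_inf (RtoC (q ^ 2)) (q ^ 2)) (qpoch_inf (RtoC (q ^ 2)) (q ^ 2))))
       (Cmul (qpoch_inf (RtoC q) (q ^ 2)) (qpoch_inf (RtoC q) (q ^ 2))).

(* x is a point where Gamma_{q^2} is defined (not a pole): the infinite
   product (q^{2x};q^2)_inf has no vanishing factor, i.e. q^{2(x+k)} <> 1
   for every k in N.  For real x this says exactly that x is not a
   non-positive integer. *)
Definition qGamma2_ok (q : R) (x : Cx) : Prop :=
  forall k : nat, qpow q (Cmul (RtoC 2) (Cadd x (RtoC (INR k)))) <> Cx1.

(** Put [p = q^2], [A = q^(2(alpha+a))], [B = q^(2(1-alpha+b))], [C = q^(2(c+1))].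
    By the shift rule [Gamma_(q^2)(x+n) = Gamma_(q^2)(x) (q^(2x);p)_n / (1-p)^n] the [n]-th
    summand is a fixed multiple of the [n]-th term of Heine's series
    [F(C) = 2phi1(A, B; C; p, C/(AB))].  This series obeys the contiguous relation
    [(1-C) (1-C/(AB)) F(C) = (1-C/A) (1-C/B) F(Cp)]; iterating it [m] times and using
    [F(C p^m) -> 1] gives Heine's q-Gauss sum
    [F(C) = (C/A, C/B; p)_oo / (C, C/(AB); p)_oo].  The infinite products are quotients of
    [Gamma_(q^2)] values again, and Gosper's reflection formula identifies
    [q^(-alpha(alpha-1)) sin_q(pi alpha) / pi_q] with [1 / (Gamma_(q^2)(alpha) Gamma_(q^2)(1-alpha))]. *)

From Stdlib Require Import Reals Lra Lia Field ClassicalEpsilon.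
From Coquelicot Require Import Coquelicot.
Open Scope R_scope.

(** * Complex arithmetic *)

Lemma Cx_ext (z w : Cx) : Re z = Re w -> Im z = Im w -> z = w.
Proof. destruct z, w; simpl; intros; subst; reflexivity. Qed.

Lemma Cx_ring_theory : ring_theory Cx0 Cx1 Cadd Cmul Csub Copp (@eq Cx).
Proof.
  constructor; intros; apply Cx_ext; destruct x; try destruct y; try destruct z;
  unfold Cx0, Cx1, RtoC, Cadd, Cmul, Csub, Copp; simpl; ring.
Qed.

Lemma Cx_field_theory :
  field_theory Cx0 Cx1 Cadd Cmul Csub Copp Cdiv Cinv (@eq Cx).
Proof.
  constructor.
  - exact Cx_ring_theory.
  - intro H. apply (f_equal Re) in H. simpl in H. lra.
  - reflexivity.
  - intros [a b] Hz. unfold Cinv, Cmul, Cx1, RtoC; simpl.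
    assert (a * a + b * b <> 0).
    { intro E. apply Hz. apply Cx_ext; simpl; nra. }
    apply Cx_ext; simpl; field; auto.
Qed.

Add Field Cx_field : Cx_field_theory.

Lemma Csub_eq0 z w : Csub z w = Cx0 -> z = w.
Proof. intro H. replace z with (Cadd (Csub z w) w) by field. rewrite H. field. Qed.

Definition Cnorm (z : Cx) : R := Cmod (Re z, Im z).

Lemma Cnorm_ge_0 z : 0 <= Cnorm z.
Proof. apply Cmod_ge_0. Qed.

Lemma Cnorm_mult z w : Cnorm (Cmul z w) = Cnorm z * Cnorm w.
Proof. apply (Cmod_mult (Re z, Im z) (Re w, Im w)). Qed.

Lemma Cnorm_triangle z w : Cnorm (Cadd z w) <= Cnorm z + Cnorm w.
Proof. apply (Cmod_triangle (Re z, Im z) (Re w, Im w)). Qed.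

Lemma Cnorm_opp z : Cnorm (Copp z) = Cnorm z.
Proof. apply (Cmod_opp (Re z, Im z)). Qed.

Lemma Cnorm_minus_le z w : Cnorm (Csub z w) <= Cnorm z + Cnorm w.
Proof. rewrite <- (Cnorm_opp w). apply Cnorm_triangle. Qed.

Lemma Cnorm_reverse_triangle z w : Cnorm z - Cnorm w <= Cnorm (Csub z w).
Proof.
  assert (H := Cnorm_triangle (Csub z w) w).
  replace (Cadd (Csub z w) w) with z in H by field. lra.
Qed.

Lemma Cnorm_RtoC r : Cnorm (RtoC r) = Rabs r.
Proof. apply Cmod_R. Qed.

Lemma Cnorm_1 : Cnorm Cx1 = 1.
Proof. unfold Cx1. rewrite Cnorm_RtoC. apply Rabs_R1. Qed.

Lemma Cnorm_0 : Cnorm Cx0 = 0.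
Proof. unfold Cx0. rewrite Cnorm_RtoC. apply Rabs_R0. Qed.

Lemma Cnorm_Re z : Rabs (Re z) <= Cnorm z.
Proof. eapply Rle_trans; [apply Rmax_l | apply (Rmax_Cmod (Re z, Im z))]. Qed.

Lemma Cnorm_Im z : Rabs (Im z) <= Cnorm z.
Proof. eapply Rle_trans; [apply Rmax_r | apply (Rmax_Cmod (Re z, Im z))]. Qed.

Lemma Cnorm_le_abs_sum z : Cnorm z <= Rabs (Re z) + Rabs (Im z).
Proof.
  unfold Cnorm, Cmod; simpl.
  rewrite <- (sqrt_Rsqr (Rabs (Re z) + Rabs (Im z)))
    by (generalize (Rabs_pos (Re z)) (Rabs_pos (Im z)); lra).
  apply sqrt_le_1_alt. unfold Rsqr.
  assert (E1 := pow2_abs (Re z)). assert (E2 := pow2_abs (Im z)).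
  generalize (Rabs_pos (Re z)) (Rabs_pos (Im z)). simpl in *. nra.
Qed.

Lemma Cnorm_eq_0 z : Cnorm z = 0 -> z = Cx0.
Proof.
  intro H. apply Cx_ext; simpl; apply Rabs_eq_0, Rle_antisym; try apply Rabs_pos;
  rewrite <- H; [apply Cnorm_Re | apply Cnorm_Im].
Qed.

Lemma Cnorm_pos z : z <> Cx0 -> 0 < Cnorm z.
Proof.
  intro H. destruct (Cnorm_ge_0 z) as [|E]; auto.
  exfalso. apply H, Cnorm_eq_0. auto.
Qed.

Lemma Cmul_neq0 z w : z <> Cx0 -> w <> Cx0 -> Cmul z w <> Cx0.
Proof.
  intros Hz Hw E. apply (f_equal Cnorm) in E. rewrite Cnorm_mult, Cnorm_0 in E.
  assert (H := Cnorm_pos z Hz). assert (H' := Cnorm_pos w Hw). nra.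
Qed.

Lemma Cdiv_neq0 z w : z <> Cx0 -> w <> Cx0 -> Cdiv z w <> Cx0.
Proof.
  intros Hz Hw E. apply Hz.
  replace z with (Cmul (Cdiv z w) w) by (field; exact Hw). rewrite E. ring.
Qed.

Lemma Cdiv_mul_l z x w : Cdiv (Cmul z x) w = Cmul (Cdiv z w) x.
Proof. unfold Cdiv. ring. Qed.

Lemma Cnorm_inv z : z <> Cx0 -> Cnorm (Cinv z) = / Cnorm z.
Proof.
  intro Hz. apply (Rmult_eq_reg_l (Cnorm z)); [|apply Rgt_not_eq, Cnorm_pos; auto].
  rewrite <- Cnorm_mult, Rinv_r by (apply Rgt_not_eq, Cnorm_pos; auto).
  replace (Cmul z (Cinv z)) with Cx1 by (field; auto). apply Cnorm_1.
Qed.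

Lemma Cnorm_div z w : w <> Cx0 -> Cnorm (Cdiv z w) = Cnorm z / Cnorm w.
Proof. intros. unfold Cdiv. rewrite Cnorm_mult, Cnorm_inv; auto. Qed.

Lemma RtoC_plus a b : RtoC (a + b) = Cadd (RtoC a) (RtoC b).
Proof. apply Cx_ext; simpl; ring. Qed.

Lemma RtoC_mult a b : RtoC (a * b) = Cmul (RtoC a) (RtoC b).
Proof. apply Cx_ext; simpl; ring. Qed.

Lemma RtoC_minus a b : RtoC (a - b) = Csub (RtoC a) (RtoC b).
Proof. apply Cx_ext; simpl; ring. Qed.

Lemma RtoC_inv a : a <> 0 -> RtoC (/ a) = Cinv (RtoC a).
Proof. intros. apply Cx_ext; simpl; field; auto. Qed.

Lemma RtoC_div a b : b <> 0 -> RtoC (a / b) = Cdiv (RtoC a) (RtoC b).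
Proof. intros. unfold Rdiv, Cdiv. rewrite RtoC_mult, RtoC_inv; auto. Qed.

Lemma RtoC_neq0 a : a <> 0 -> RtoC a <> Cx0.
Proof. intros H E. apply H. exact (f_equal Re E). Qed.

(** * Limits of complex sequences *)

Lemma Ccv_is_lim_seq u l :
  Ccv u l <-> is_lim_seq (fun n => Re (u n)) (Re l) /\ is_lim_seq (fun n => Im (u n)) (Im l).
Proof. unfold Ccv. rewrite !is_lim_seq_Reals. tauto. Qed.

Lemma Ccv_unique u l1 l2 : Ccv u l1 -> Ccv u l2 -> l1 = l2.
Proof.
  rewrite !Ccv_is_lim_seq. intros [H1 H2] [H3 H4].
  apply Cx_ext; apply Rbar_finite_eq;
    [rewrite <- (is_lim_seq_unique _ _ H1) | rewrite <- (is_lim_seq_unique _ _ H2)];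
    apply is_lim_seq_unique; assumption.
Qed.

Lemma Clim_correct u l : Ccv u l -> Clim u = l.
Proof.
  intro H. apply (Ccv_unique u); [|exact H].
  unfold Clim. apply epsilon_spec. exists l; auto.
Qed.

Lemma Ccv_ext u v l : (forall n, u n = v n) -> Ccv u l -> Ccv v l.
Proof.
  rewrite !Ccv_is_lim_seq. intros E [H1 H2].
  split; eapply is_lim_seq_ext; eauto; intro n; simpl; rewrite E; reflexivity.
Qed.

Lemma Ccv_incr_n u l k : Ccv u l <-> Ccv (fun n => u (n + k)%nat) l.
Proof.
  rewrite !Ccv_is_lim_seq, (is_lim_seq_incr_n (fun n => Re (u n)) k),
    (is_lim_seq_incr_n (fun n => Im (u n)) k). tauto.
Qed.

Lemma Ccv_const c : Ccv (fun _ => c) c.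
Proof. rewrite Ccv_is_lim_seq; split; apply is_lim_seq_const. Qed.

Lemma Ccv_plus u v l m :
  Ccv u l -> Ccv v m -> Ccv (fun n => Cadd (u n) (v n)) (Cadd l m).
Proof.
  rewrite !Ccv_is_lim_seq; intros [] []; split; simpl; apply is_lim_seq_plus'; auto.
Qed.

Lemma Ccv_opp u l : Ccv u l -> Ccv (fun n => Copp (u n)) (Copp l).
Proof.
  rewrite !Ccv_is_lim_seq; intros [H1 H2]; split;
  [exact (proj1 (is_lim_seq_opp _ _) H1) | exact (proj1 (is_lim_seq_opp _ _) H2)].
Qed.

Lemma Ccv_minus u v l m :
  Ccv u l -> Ccv v m -> Ccv (fun n => Csub (u n) (v n)) (Csub l m).
Proof. intros; apply Ccv_plus, Ccv_opp; auto. Qed.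

Lemma Ccv_mult u v l m :
  Ccv u l -> Ccv v m -> Ccv (fun n => Cmul (u n) (v n)) (Cmul l m).
Proof.
  rewrite !Ccv_is_lim_seq; intros [] []; split; simpl;
  [apply is_lim_seq_minus' | apply is_lim_seq_plus']; apply is_lim_seq_mult'; auto.
Qed.

Lemma Ccv_inv u l : Ccv u l -> l <> Cx0 -> Ccv (fun n => Cinv (u n)) (Cinv l).
Proof.
  intros H Hl.
  assert (Hd : Re l * Re l + Im l * Im l <> 0).
  { intro E. apply Hl. apply Cx_ext; simpl; nra. }
  rewrite !Ccv_is_lim_seq in *. destruct H as [H1 H2].
  assert (D : is_lim_seq (fun n => Re (u n) * Re (u n) + Im (u n) * Im (u n))
                (Re l * Re l + Im l * Im l))
    by (apply is_lim_seq_plus'; apply is_lim_seq_mult'; auto).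
  split; simpl; apply is_lim_seq_div'; auto. exact (proj1 (is_lim_seq_opp _ _) H2).
Qed.

Lemma Ccv_div u v l m :
  Ccv u l -> Ccv v m -> m <> Cx0 -> Ccv (fun n => Cdiv (u n) (v n)) (Cdiv l m).
Proof. intros; apply Ccv_mult, Ccv_inv; auto. Qed.

Lemma is_lim_seq_Rabs_minus (f : nat -> R) (x : R) :
  is_lim_seq f x <-> is_lim_seq (fun n => Rabs (f n - x)) 0.
Proof.
  split; intro H.
  - rewrite <- Rabs_R0, <- (Rminus_diag x).
    apply (is_lim_seq_abs (fun n => f n - x) (x - x)).
    apply is_lim_seq_minus'; [exact H | apply is_lim_seq_const].
  - apply is_lim_seq_abs_0 in H.
    apply (is_lim_seq_plus' _ (fun _ => x) 0 x) in H; [|apply is_lim_seq_const].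
    rewrite Rplus_0_l in H. eapply is_lim_seq_ext; [|exact H]. intro; simpl; ring.
Qed.

Lemma Ccv_Cnorm u l : Ccv u l <-> is_lim_seq (fun n => Cnorm (Csub (u n) l)) 0.
Proof.
  rewrite Ccv_is_lim_seq, !(is_lim_seq_Rabs_minus (fun n => _ (u n))).
  split.
  - intros [H1 H2].
    apply (is_lim_seq_le_le (fun _ => 0) _
             (fun n => Rabs (Re (u n) - Re l) + Rabs (Im (u n) - Im l))).
    + intro n. split; [apply Cnorm_ge_0 | apply (Cnorm_le_abs_sum (Csub (u n) l))].
    + apply is_lim_seq_const.
    + rewrite <- (Rplus_0_l 0). apply is_lim_seq_plus'; auto.
  - intro H.
    assert (Hsq : forall g : nat -> R, (forall n, g n <= Cnorm (Csub (u n) l)) ->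
                  (forall n, 0 <= g n) -> is_lim_seq g 0).
    { intros g Hg Hg0. apply (is_lim_seq_le_le (fun _ => 0) _ _ _ (fun n => conj (Hg0 n) (Hg n))).
      - apply is_lim_seq_const.
      - exact H. }
    split; apply Hsq; intro n; try apply Rabs_pos.
    + apply (Cnorm_Re (Csub (u n) l)).
    + apply (Cnorm_Im (Csub (u n) l)).
Qed.

Lemma Ccv_squeeze u l e :
  (forall n, Cnorm (Csub (u n) l) <= e n) -> is_lim_seq e 0 -> Ccv u l.
Proof.
  intros H He. apply Ccv_Cnorm, (is_lim_seq_le_le (fun _ => 0) _ e); auto.
  - intro n; split; auto. apply Cnorm_ge_0.
  - apply is_lim_seq_const.
Qed.

Lemma Ccv_Cnorm_minus u l c :
  Ccv u l -> is_lim_seq (fun n => Cnorm (Csub (u n) c)) (Cnorm (Csub l c)).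
Proof.
  intro H. apply Ccv_Cnorm in H. apply is_lim_seq_Rabs_minus.
  apply (is_lim_seq_le_le (fun _ => 0) _ (fun n => Cnorm (Csub (u n) l)));
    [|apply is_lim_seq_const|exact H].
  intro n. split; [apply Rabs_pos|].
  replace (Csub (u n) l) with (Csub (Csub (u n) c) (Csub l c)) by field.
  apply Rabs_le. generalize (Cnorm_reverse_triangle (Csub (u n) c) (Csub l c))
    (Cnorm_reverse_triangle (Csub l c) (Csub (u n) c)).
  replace (Csub (Csub l c) (Csub (u n) c)) with (Copp (Csub (Csub (u n) c) (Csub l c)))
    by field.
  rewrite Cnorm_opp. lra.
Qed.

Lemma Ccv_Cnorm_le u l c B N :
  Ccv u l -> (forall n, (N <= n)%nat -> Cnorm (Csub (u n) c) <= B) -> Cnorm (Csub l c) <= B.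
Proof.
  intros H Hb.
  apply (is_lim_seq_le_loc (fun n => Cnorm (Csub (u n) c)) (fun _ => B) (Cnorm (Csub l c)) B); [|apply Ccv_Cnorm_minus, H|apply is_lim_seq_const].
  exists N. exact Hb.
Qed.

Lemma Ccv_Cnorm_ge u l L : Ccv u l -> (forall n, L <= Cnorm (u n)) -> L <= Cnorm l.
Proof.
  intros H Hb. replace l with (Csub l Cx0) by field.
  apply (is_lim_seq_le (fun _ => L) (fun n => Cnorm (Csub (u n) Cx0)) L (Cnorm (Csub l Cx0))); [|apply is_lim_seq_const|apply Ccv_Cnorm_minus, H].
  intro n. replace (Csub (u n) Cx0) with (u n) by field. apply Hb.
Qed.

Lemma eventually_geom_lt c p e :
  0 <= p < 1 -> 0 < e -> exists N, forall n, (N <= n)%nat -> c * p ^ n < e.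
Proof.
  intros Hp He.
  assert (H : is_lim_seq (fun n => c * p ^ n) 0).
  { rewrite <- (Rmult_0_r c). apply (is_lim_seq_scal_l _ c 0), is_lim_seq_geom.
    rewrite Rabs_pos_eq; lra. }
  apply is_lim_seq_Reals in H. destruct (H e He) as [N HN].
  exists N. intros n Hn. specialize (HN n Hn). unfold R_dist in HN.
  rewrite Rminus_0_r in HN. apply Rabs_lt_between in HN. lra.
Qed.

Lemma ex_lim_seq_of_geom_increments (v : nat -> R) K r :
  0 <= r < 1 -> (forall n, Rabs (v (S n) - v n) <= K * r ^ n) -> exists l : R, is_lim_seq v l.
Proof.
  intros Hr H.
  assert (E : ex_series (fun n => v (S n) - v n)).
  { apply (@ex_series_le R_AbsRing R_CompleteNormedModule _ (fun n => K * r ^ n)); auto.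
    apply (ex_series_ext (fun n => r ^ n * K)); [intro; apply Rmult_comm|].
    apply ex_series_scal_r, ex_series_geom. rewrite Rabs_pos_eq; lra. }
  destruct E as [L HL]. exists (L + v O).
  apply is_lim_seq_incr_1.
  apply (is_lim_seq_ext (fun n => sum_n (fun k => v (S k) - v k) n + v O)).
  { intro n. induction n.
    - rewrite sum_O. ring.
    - rewrite sum_Sn. unfold plus; simpl. lra. }
  apply is_lim_seq_plus'; [apply HL | apply is_lim_seq_const].
Qed.

Lemma Ccv_ex_of_geom_increments (u : nat -> Cx) K r :
  0 <= r < 1 -> (forall n, Cnorm (Csub (u (S n)) (u n)) <= K * r ^ n) -> exists l, Ccv u l.
Proof.
  intros Hr H.
  destruct (ex_lim_seq_of_geom_increments (fun n => Re (u n)) K r Hr) as [a Ha].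
  { intro n. eapply Rle_trans; [apply (Cnorm_Re (Csub (u (S n)) (u n))) | apply H]. }
  destruct (ex_lim_seq_of_geom_increments (fun n => Im (u n)) K r Hr) as [b Hb].
  { intro n. eapply Rle_trans; [apply (Cnorm_Im (Csub (u (S n)) (u n))) | apply H]. }
  exists (Cmk a b). apply Ccv_is_lim_seq. auto.
Qed.

Lemma Csum_ext N f g : (forall n, f n = g n) -> Csum N f = Csum N g.
Proof. intro H; induction N; simpl; auto. rewrite IHN, H; auto. Qed.

Lemma Csum_scal_l N K f : Csum N (fun n => Cmul K (f n)) = Cmul K (Csum N f).
Proof. induction N; cbn [Csum]; [|rewrite IHN]; field. Qed.

Lemma Csum_S_l N f : Csum (S N) f = Cadd (f O) (Csum N (fun n => f (S n))).
Proof. induction N; [simpl; field|]. cbn [Csum] in *. rewrite IHN. field. Qed.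

Lemma Csum_Cnorm_le_geom N f K g :
  g <> 1 -> (forall n, Cnorm (f n) <= K * g ^ n) -> Cnorm (Csum N f) <= K * (1 - g ^ N) / (1 - g).
Proof.
  intros Hg H. induction N; simpl.
  - rewrite Cnorm_0. right. field. lra.
  - eapply Rle_trans; [apply Cnorm_triangle|].
    replace (K * (1 - g * g ^ N) / (1 - g)) with (K * (1 - g ^ N) / (1 - g) + K * g ^ N)
      by (field; lra).
    apply Rplus_le_compat; auto.
Qed.

Lemma Csum_ex_Ccv_geom f K r :
  0 <= r < 1 -> (forall n, Cnorm (f n) <= K * r ^ n) -> exists l, Ccv (fun N => Csum N f) l.
Proof.
  intros Hr H. apply (Ccv_ex_of_geom_increments _ K r Hr). intro n. simpl.
  replace (Csub (Cadd (Csum n f) (f n)) (Csum n f)) with (f n) by field. auto.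
Qed.

(** * Powers and exponentials *)

Definition Cpow (z : Cx) (n : nat) : Cx := Cprod n (fun _ => z).

Lemma Cpow_S z n : Cpow z (S n) = Cmul (Cpow z n) z.
Proof. reflexivity. Qed.

Lemma Cpow_RtoC r n : Cpow (RtoC r) n = RtoC (r ^ n).
Proof. induction n; [reflexivity|]. rewrite Cpow_S, IHn, <- RtoC_mult. f_equal. simpl; ring. Qed.

Lemma Cpow_mult z w n : Cpow (Cmul z w) n = Cmul (Cpow z n) (Cpow w n).
Proof. induction n; [unfold Cpow; simpl; field|]. rewrite !Cpow_S, IHn. field. Qed.

Lemma Cnorm_Cpow z n : Cnorm (Cpow z n) = Cnorm z ^ n.
Proof. induction n; [apply Cnorm_1|]. rewrite Cpow_S, Cnorm_mult, IHn. simpl; ring. Qed.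

Lemma Cexp_plus z w : Cexp (Cadd z w) = Cmul (Cexp z) (Cexp w).
Proof.
  destruct z as [a b], w as [c d]. unfold Cexp, Cadd, Cmul; simpl.
  rewrite exp_plus, cos_plus, sin_plus. apply Cx_ext; simpl; ring.
Qed.

Lemma Cexp_RtoC r : Cexp (RtoC r) = RtoC (exp r).
Proof. unfold Cexp, RtoC; simpl. rewrite cos_0, sin_0. apply Cx_ext; simpl; ring. Qed.

Lemma Cnorm_Cexp z : Cnorm (Cexp z) = exp (Re z).
Proof.
  unfold Cnorm, Cmod, Cexp; simpl.
  transitivity (sqrt (exp (Re z) ^ 2)); [f_equal | apply sqrt_pow2, Rlt_le, exp_pos].
  replace (exp (Re z) ^ 2) with (exp (Re z) ^ 2 * (Rsqr (sin (Im z)) + Rsqr (cos (Im z))))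
    by (rewrite sin2_cos2; ring).
  unfold Rsqr. ring.
Qed.

Lemma Cexp_neq0 z : Cexp z <> Cx0.
Proof.
  intro E. apply (f_equal Cnorm) in E. rewrite Cnorm_Cexp, Cnorm_0 in E.
  generalize (exp_pos (Re z)). lra.
Qed.

Lemma Cexp_minus z w : Cexp (Csub z w) = Cdiv (Cexp z) (Cexp w).
Proof.
  assert (Hw := Cexp_neq0 w).
  replace (Cexp z) with (Cexp (Cadd (Csub z w) w)) by (f_equal; field).
  rewrite Cexp_plus. field. auto.
Qed.

Lemma Cexp_nat n z : Cexp (Cmul (RtoC (INR n)) z) = Cpow (Cexp z) n.
Proof.
  induction n.
  - replace (Cmul (RtoC (INR 0)) z) with (RtoC 0) by (apply Cx_ext; simpl; ring).
    rewrite Cexp_RtoC, exp_0. reflexivity.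
  - rewrite S_INR, RtoC_plus, Cpow_S, <- IHn, <- Cexp_plus. f_equal.
    change (RtoC 1) with Cx1. field.
Qed.

Lemma qpow_plus q x y : qpow q (Cadd x y) = Cmul (qpow q x) (qpow q y).
Proof. unfold qpow. rewrite <- Cexp_plus. f_equal. field. Qed.

Lemma qpow_minus q x y : qpow q (Csub x y) = Cdiv (qpow q x) (qpow q y).
Proof. unfold qpow. rewrite <- Cexp_minus. f_equal. field. Qed.

Lemma qpow_neq0 q x : qpow q x <> Cx0.
Proof. apply Cexp_neq0. Qed.

Lemma qpow_RtoC q r : qpow q (RtoC r) = RtoC (Rpower q r).
Proof. unfold qpow, Rpower. rewrite <- RtoC_mult, Cexp_RtoC. f_equal. f_equal. ring. Qed.

Lemma qpow_nat q n x : qpow q (Cmul (RtoC (INR n)) x) = Cpow (qpow q x) n.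
Proof. unfold qpow. rewrite <- Cexp_nat. f_equal. field. Qed.

Lemma Cnorm_qpow q x : Cnorm (qpow q x) = exp (ln q * Re x).
Proof. unfold qpow. rewrite Cnorm_Cexp. f_equal. simpl. ring. Qed.

Lemma qpow_INR q n : 0 < q -> qpow q (RtoC (INR n)) = RtoC (q ^ n).
Proof. intro Hq. rewrite qpow_RtoC, Rpower_pow; auto. Qed.

Lemma exp_le_exp x y : x <= y -> exp x <= exp y.
Proof. intros [H|H]; [left; apply exp_increasing, H | right; rewrite H; reflexivity]. Qed.

Lemma pow_le_1 p n : 0 <= p <= 1 -> p ^ n <= 1.
Proof. intro Hp. rewrite <- (pow1 n). apply pow_incr. exact Hp. Qed.

(** * q-Pochhammer symbols *)

Definition qpoch (w : Cx) (p : R) (n : nat) : Cx :=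
  Cprod n (fun k => Csub Cx1 (Cmul w (RtoC (p ^ k)))).

Lemma qpoch_S w p n : qpoch w p (S n) = Cmul (qpoch w p n) (Csub Cx1 (Cmul w (RtoC (p ^ n)))).
Proof. reflexivity. Qed.

Lemma qpoch_plus w p n m :
  qpoch w p (n + m) = Cmul (qpoch w p n) (qpoch (Cmul w (RtoC (p ^ n))) p m).
Proof.
  induction m.
  - rewrite Nat.add_0_r. unfold qpoch at 3; simpl. field.
  - rewrite Nat.add_succ_r, !qpoch_S, IHm, pow_add, RtoC_mult. field.
Qed.

Lemma qpoch_S_l w p n : qpoch w p (S n) = Cmul (Csub Cx1 w) (qpoch (Cmul w (RtoC p)) p n).
Proof.
  rewrite <- Nat.add_1_l, qpoch_plus, pow_1. f_equal.
  unfold qpoch; simpl. change (RtoC 1) with Cx1. field.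
Qed.

Lemma qpoch_Cnorm_le w p n : 0 <= p < 1 -> Cnorm (qpoch w p n) <= exp (Cnorm w / (1 - p)).
Proof.
  intro Hp.
  assert (H : Cnorm (qpoch w p n) <= exp (Cnorm w * (1 - p ^ n) / (1 - p))).
  { induction n.
    - unfold qpoch; cbn [Cprod pow]. rewrite Cnorm_1. replace (Cnorm w * (1 - 1) / (1 - p)) with 0 by (field; lra).
      rewrite exp_0. lra.
    - rewrite qpoch_S, Cnorm_mult.
      replace (Cnorm w * (1 - p ^ S n) / (1 - p))
        with (Cnorm w * (1 - p ^ n) / (1 - p) + Cnorm w * p ^ n) by (simpl; field; lra).
      rewrite exp_plus. apply Rmult_le_compat; auto using Cnorm_ge_0.
      eapply Rle_trans; [apply Cnorm_minus_le|].
      rewrite Cnorm_1, Cnorm_mult, Cnorm_RtoC, Rabs_pos_eq by (apply pow_le; lra).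
      eapply Rle_trans; [|apply exp_ineq1_le]. lra. }
  eapply Rle_trans; [exact H|]. apply exp_le_exp.
  unfold Rdiv. apply Rmult_le_compat_r; [apply Rlt_le, Rinv_0_lt_compat; lra|].
  assert (0 <= p ^ n) by (apply pow_le; lra). generalize (Cnorm_ge_0 w). nra.
Qed.

Lemma exp_neg_div_le_1_minus x th :
  0 <= x <= th -> th < 1 -> exp (- (x / (1 - th))) <= 1 - x.
Proof.
  intros Hx Hth.
  assert (A : 1 + x / (1 - th) <= exp (x / (1 - th))) by apply exp_ineq1_le.
  assert (B : / (1 - x) <= 1 + x / (1 - th)).
  { replace (/ (1 - x)) with (1 + x / (1 - x)) by (field; lra).
    apply Rplus_le_compat_l. unfold Rdiv. apply Rmult_le_compat_l; [lra|].
    apply Rinv_le_contravar; lra. }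
  rewrite exp_Ropp, <- (Rinv_inv (1 - x)).
  apply Rinv_le_contravar; [apply Rinv_0_lt_compat; lra | lra].
Qed.

Lemma qpoch_Cnorm_ge w p n th : 0 <= p < 1 -> Cnorm w <= th -> th < 1 ->
  exp (- (Cnorm w / ((1 - th) * (1 - p)))) <= Cnorm (qpoch w p n).
Proof.
  intros Hp Hw Hth.
  assert (H : exp (- (Cnorm w * (1 - p ^ n) / ((1 - th) * (1 - p)))) <= Cnorm (qpoch w p n)).
  { induction n.
    - unfold qpoch; cbn [Cprod pow]. rewrite Cnorm_1.
      replace (- (Cnorm w * (1 - 1) / ((1 - th) * (1 - p)))) with 0 by (field; lra).
      rewrite exp_0. lra.
    - rewrite qpoch_S, Cnorm_mult.
      replace (- (Cnorm w * (1 - p ^ S n) / ((1 - th) * (1 - p))))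
        with (- (Cnorm w * (1 - p ^ n) / ((1 - th) * (1 - p))) + - (Cnorm w * p ^ n / (1 - th)))
        by (simpl; field; lra).
      rewrite exp_plus. apply Rmult_le_compat; auto using Rlt_le, exp_pos.
      assert (Hpn : 0 <= p ^ n <= 1) by (split; [apply pow_le | apply pow_le_1]; lra).
      assert (T := Cnorm_reverse_triangle Cx1 (Cmul w (RtoC (p ^ n)))).
      rewrite Cnorm_1, Cnorm_mult, Cnorm_RtoC, Rabs_pos_eq in T by lra.
      eapply Rle_trans; [apply exp_neg_div_le_1_minus|]; [|exact Hth|exact T].
      split; [apply Rmult_le_pos; [apply Cnorm_ge_0 | lra] | generalize (Cnorm_ge_0 w); nra]. }
  eapply Rle_trans; [|exact H]. apply exp_le_exp, Ropp_le_contravar.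
  unfold Rdiv. apply Rmult_le_compat_r.
  - apply Rlt_le, Rinv_0_lt_compat, Rmult_lt_0_compat; lra.
  - assert (0 <= p ^ n) by (apply pow_le; lra). generalize (Cnorm_ge_0 w). nra.
Qed.

Lemma qpoch_cv w p : 0 <= p < 1 -> Ccv (qpoch w p) (qpoch_inf w p).
Proof.
  intro Hp.
  destruct (Ccv_ex_of_geom_increments (qpoch w p) (exp (Cnorm w / (1 - p)) * Cnorm w) p Hp)
    as [l Hl].
  - intro n. rewrite qpoch_S.
    replace (Csub (Cmul (qpoch w p n) (Csub Cx1 (Cmul w (RtoC (p ^ n))))) (qpoch w p n))
      with (Copp (Cmul (qpoch w p n) (Cmul w (RtoC (p ^ n))))) by field.
    rewrite Cnorm_opp, !Cnorm_mult, Cnorm_RtoC, Rabs_pos_eq by (apply pow_le; lra).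
    rewrite <- Rmult_assoc. apply Rmult_le_compat_r; [apply pow_le; lra|].
    apply Rmult_le_compat_r; [apply Cnorm_ge_0 | apply qpoch_Cnorm_le; auto].
  - unfold qpoch_inf. fold (qpoch w p). rewrite (Clim_correct _ l Hl). exact Hl.
Qed.

Lemma qpoch_inf_split w p n : 0 <= p < 1 ->
  qpoch_inf w p = Cmul (qpoch w p n) (qpoch_inf (Cmul w (RtoC (p ^ n))) p).
Proof.
  intro Hp. apply (Ccv_unique (fun m => qpoch w p (m + n))).
  - apply Ccv_incr_n, qpoch_cv, Hp.
  - apply (Ccv_ext (fun m => Cmul (qpoch w p n) (qpoch (Cmul w (RtoC (p ^ n))) p m))).
    + intro m. rewrite Nat.add_comm, qpoch_plus. reflexivity.
    + apply Ccv_mult; [apply Ccv_const | apply qpoch_cv, Hp].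
Qed.

Lemma qpoch_inf_Cnorm_ge w p th : 0 <= p < 1 -> Cnorm w <= th -> th < 1 ->
  exp (- (Cnorm w / ((1 - th) * (1 - p)))) <= Cnorm (qpoch_inf w p).
Proof.
  intros. apply (Ccv_Cnorm_ge (qpoch w p)); [apply qpoch_cv; auto|].
  intro; apply qpoch_Cnorm_ge; auto.
Qed.

Definition qpoch_regular (w : Cx) (p : R) : Prop := forall k, Cmul w (RtoC (p ^ k)) <> Cx1.

Lemma qpoch_regular_factor w p k : qpoch_regular w p -> Csub Cx1 (Cmul w (RtoC (p ^ k))) <> Cx0.
Proof.
  intros G E. apply (G k).
  replace (Cmul w (RtoC (p ^ k))) with (Csub Cx1 (Csub Cx1 (Cmul w (RtoC (p ^ k))))) by field.
  rewrite E. field.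
Qed.

Lemma qpoch_regular_1 w p : qpoch_regular w p -> Csub Cx1 w <> Cx0.
Proof.
  intro G. replace w with (Cmul w (RtoC (p ^ 0))); [apply qpoch_regular_factor, G|].
  simpl. change (RtoC 1) with Cx1. field.
Qed.

Lemma qpoch_regular_shift w p m : qpoch_regular w p -> qpoch_regular (Cmul w (RtoC (p ^ m))) p.
Proof. intros G k E. apply (G (m + k)%nat). rewrite pow_add, RtoC_mult, <- E. field. Qed.

Lemma qpoch_regular_small r p : 0 <= p <= 1 -> 0 <= r < 1 -> qpoch_regular (RtoC r) p.
Proof.
  intros Hp Hr k E. apply (f_equal Re) in E. simpl in E.
  assert (0 <= p ^ k <= 1) by (split; [apply pow_le | apply pow_le_1]; lra). nra.
Qed.

Lemma qpoch_neq0 w p n : qpoch_regular w p -> qpoch w p n <> Cx0.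
Proof.
  intro G. induction n; [apply RtoC_neq0, R1_neq_R0|].
  apply Cmul_neq0; [exact IHn | apply qpoch_regular_factor, G].
Qed.

Lemma qpoch_tail_small w p : 0 <= p < 1 ->
  exists N, forall n, (N <= n)%nat -> Cnorm (Cmul w (RtoC (p ^ n))) <= 1 / 2.
Proof.
  intro Hp. destruct (eventually_geom_lt (Cnorm w) p (1 / 2) Hp) as [N HN]; [lra|].
  exists N. intros n Hn. rewrite Cnorm_mult, Cnorm_RtoC, Rabs_pos_eq by (apply pow_le; lra).
  left. auto.
Qed.

Lemma qpoch_inf_neq0 w p : 0 <= p < 1 -> qpoch_regular w p -> qpoch_inf w p <> Cx0.
Proof.
  intros Hp G. destruct (qpoch_tail_small w p Hp) as [N HN].
  rewrite (qpoch_inf_split w p N Hp). apply Cmul_neq0; [apply qpoch_neq0, G|].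
  intro E. assert (T := qpoch_inf_Cnorm_ge _ p (1 / 2) Hp (HN N (le_n N)) ltac:(lra)).
  rewrite E, Cnorm_0 in T. generalize (exp_pos (- (Cnorm (Cmul w (RtoC (p ^ N)))
    / ((1 - 1 / 2) * (1 - p))))). lra.
Qed.

Lemma finite_min_pos (u : nat -> R) N :
  (forall n, 0 < u n) -> exists d, 0 < d /\ forall n, (n <= N)%nat -> d <= u n.
Proof.
  intro Hu. induction N as [|N [d [Hd H]]].
  - exists (u O). split; auto. intros n Hn. inversion Hn. lra.
  - exists (Rmin d (u (S N))). split; [apply Rmin_pos; auto|].
    intros n Hn. destruct (Nat.eq_dec n (S N)) as [->|]; [apply Rmin_r|].
    eapply Rle_trans; [apply Rmin_l | apply H; lia].
Qed.

Lemma qpoch_Cnorm_ge_unif w p : 0 <= p < 1 -> qpoch_regular w p ->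
  exists d, 0 < d /\ forall n, d <= Cnorm (qpoch w p n).
Proof.
  intros Hp G. destruct (qpoch_tail_small w p Hp) as [N HN].
  destruct (finite_min_pos (fun n => Cnorm (qpoch w p n)) N) as [d [Hd H]].
  { intro n. apply Cnorm_pos, qpoch_neq0, G. }
  set (c := exp (- (Cnorm (Cmul w (RtoC (p ^ N))) / ((1 - 1 / 2) * (1 - p))))).
  assert (Hc0 : 0 < c) by apply exp_pos.
  assert (Hc1 : c <= 1).
  { rewrite <- exp_0. apply exp_le_exp, Ropp_le_cancel. rewrite Ropp_involutive, Ropp_0.
    apply Rdiv_le_0_compat; [apply Cnorm_ge_0 | apply Rmult_lt_0_compat; lra]. }
  exists (d * c). split; [nra|]. intro n.
  destruct (Compare_dec.le_lt_dec n N) as [Hn|Hn].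
  - specialize (H n Hn). nra.
  - replace n with (N + (n - N))%nat by lia. rewrite qpoch_plus, Cnorm_mult.
    apply Rmult_le_compat; try lra; [apply H; lia|].
    apply qpoch_Cnorm_ge; auto; lra.
Qed.

(** * Heine's q-Gauss summation *)

Definition heine_term (A B C : Cx) (p : R) (n : nat) : Cx :=
  Cmul (Cdiv (Cmul (qpoch A p n) (qpoch B p n)) (Cmul (qpoch (RtoC p) p n) (qpoch C p n)))
       (Cpow (Cdiv C (Cmul A B)) n).

Definition heine_sum (A B C : Cx) (p : R) : Cx := Clim (fun N => Csum N (heine_term A B C p)).

Section HeineSeries.

Variables (A B : Cx) (p : R).
Hypotheses (HA : A <> Cx0) (HB : B <> Cx0) (Hp : 0 <= p < 1).

Let Gpp : qpoch_regular (RtoC p) p.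
Proof. apply qpoch_regular_small; lra. Qed.

Lemma heine_term_0 C : heine_term A B C p 0 = Cx1.
Proof. unfold heine_term, qpoch, Cpow; cbn [Cprod]. field. apply RtoC_neq0, R1_neq_R0. Qed.

Lemma heine_term_S C n : qpoch_regular C p ->
  heine_term A B C p (S n) = Cmul (heine_term A B C p n)
    (Cdiv (Cmul (Cmul (Csub Cx1 (Cmul A (RtoC (p ^ n)))) (Csub Cx1 (Cmul B (RtoC (p ^ n)))))
                (Cdiv C (Cmul A B)))
          (Cmul (Csub Cx1 (Cmul (RtoC p) (RtoC (p ^ n)))) (Csub Cx1 (Cmul C (RtoC (p ^ n)))))).
Proof.
  intro G. unfold heine_term. rewrite !qpoch_S, Cpow_S.
  assert (H1 := qpoch_neq0 _ p n Gpp). assert (H2 := qpoch_neq0 C p n G).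
  assert (H3 := qpoch_regular_factor _ p n Gpp). assert (H4 := qpoch_regular_factor C p n G).
  field. repeat split; auto.
Qed.

Lemma heine_term_shift_C C n : qpoch_regular C p ->
  heine_term A B (Cmul C (RtoC p)) p n = Cmul (heine_term A B C p n)
    (Cdiv (Cmul (Csub Cx1 C) (RtoC (p ^ n))) (Csub Cx1 (Cmul C (RtoC (p ^ n))))).
Proof.
  intro G. unfold heine_term.
  assert (H1 := qpoch_neq0 _ p n Gpp). assert (H2 := qpoch_neq0 C p n G).
  assert (H3 := qpoch_regular_factor C p n G). assert (H4 := qpoch_regular_1 C p G).
  assert (E : qpoch (Cmul C (RtoC p)) p n
              = Cdiv (Cmul (qpoch C p n) (Csub Cx1 (Cmul C (RtoC (p ^ n))))) (Csub Cx1 C)).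
  { rewrite <- qpoch_S, qpoch_S_l. field. auto. }
  rewrite E.
  replace (Cdiv (Cmul C (RtoC p)) (Cmul A B)) with (Cmul (Cdiv C (Cmul A B)) (RtoC p))
    by (field; auto).
  rewrite Cpow_mult, Cpow_RtoC.
  field. repeat split; auto.
Qed.

(** Truncated form of Heine's contiguous relation
    [(1 - C) (1 - C/(AB)) F(C) = (1 - C/A) (1 - C/B) F(Cp)]. *)
Lemma heine_partial_contiguous C M : qpoch_regular C p ->
  Csub (Cmul (Cmul (Csub Cx1 C) (Csub Cx1 (Cdiv C (Cmul A B)))) (Csum M (heine_term A B C p)))
       (Cmul (Cmul (Csub Cx1 (Cdiv C A)) (Csub Cx1 (Cdiv C B)))
             (Csum M (heine_term A B (Cmul C (RtoC p)) p)))
  = Copp (Cmul (Cmul (Csub Cx1 C) (Csub Cx1 (RtoC (p ^ M)))) (heine_term A B C p M)).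
Proof.
  intro G. induction M as [|M IHM].
  - cbn [Csum pow]. rewrite heine_term_0. change (RtoC 1) with Cx1. field; auto.
  - cbn [Csum].
    set (X := heine_term A B C p M) in *. set (Y := heine_term A B (Cmul C (RtoC p)) p M).
    transitivity (Cadd (Copp (Cmul (Cmul (Csub Cx1 C) (Csub Cx1 (RtoC (p ^ M)))) X))
      (Csub (Cmul (Cmul (Csub Cx1 C) (Csub Cx1 (Cdiv C (Cmul A B)))) X)
            (Cmul (Cmul (Csub Cx1 (Cdiv C A)) (Csub Cx1 (Cdiv C B))) Y))).
    { rewrite <- IHM. field; auto. }
    unfold Y. rewrite heine_term_shift_C by exact G. unfold X.
    rewrite heine_term_S by exact G.
    replace (RtoC (p ^ S M)) with (Cmul (RtoC p) (RtoC (p ^ M))) by (symmetry; apply RtoC_mult).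
    assert (H1 := qpoch_regular_factor _ p M Gpp). assert (H2 := qpoch_regular_factor C p M G).
    field. repeat split; auto.
Qed.

Lemma heine_term_Cnorm_le C d n :
  0 < d -> (forall n, d <= Cnorm (Cmul (qpoch (RtoC p) p n) (qpoch C p n))) ->
  Cnorm (heine_term A B C p n)
  <= exp (Cnorm A / (1 - p)) * exp (Cnorm B / (1 - p)) / d * Cnorm (Cdiv C (Cmul A B)) ^ n.
Proof.
  intros Hd H. specialize (H n).
  assert (Hden : Cmul (qpoch (RtoC p) p n) (qpoch C p n) <> Cx0).
  { intro E. rewrite E, Cnorm_0 in H. lra. }
  unfold heine_term. rewrite Cnorm_mult, Cnorm_div, Cnorm_mult, Cnorm_Cpow by exact Hden.
  apply Rmult_le_compat_r; [apply pow_le, Cnorm_ge_0|].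
  unfold Rdiv. apply Rmult_le_compat.
  - apply Rmult_le_pos; apply Cnorm_ge_0.
  - apply Rlt_le, Rinv_0_lt_compat, Cnorm_pos, Hden.
  - apply Rmult_le_compat; try apply Cnorm_ge_0; apply qpoch_Cnorm_le, Hp.
  - apply Rinv_le_contravar; auto.
Qed.

Lemma heine_term_bound C : qpoch_regular C p ->
  exists K, forall n, Cnorm (heine_term A B C p n) <= K * Cnorm (Cdiv C (Cmul A B)) ^ n.
Proof.
  intro G.
  destruct (qpoch_Cnorm_ge_unif _ p Hp Gpp) as [d0 [Hd0 H0]].
  destruct (qpoch_Cnorm_ge_unif C p Hp G) as [d [Hd H]].
  eexists. intro n. apply heine_term_Cnorm_le with (d := d0 * d); [nra|].
  intro k. rewrite Cnorm_mult. apply Rmult_le_compat; [lra | lra | apply H0 | apply H].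
Qed.

Lemma heine_term_bound_unif : exists K, 0 <= K /\ forall C n, Cnorm C <= 1 / 2 ->
  Cnorm (heine_term A B C p n) <= K * Cnorm (Cdiv C (Cmul A B)) ^ n.
Proof.
  destruct (qpoch_Cnorm_ge_unif _ p Hp Gpp) as [d0 [Hd0 H0]].
  set (d := exp (- ((1 / 2) / ((1 - 1 / 2) * (1 - p))))).
  assert (Hd : 0 < d) by apply exp_pos.
  exists (exp (Cnorm A / (1 - p)) * exp (Cnorm B / (1 - p)) / (d0 * d)).
  split.
  { apply Rdiv_le_0_compat; [apply Rmult_le_pos; apply Rlt_le, exp_pos | nra]. }
  intros C n HC. apply heine_term_Cnorm_le; [nra|].
  intro k. rewrite Cnorm_mult. apply Rmult_le_compat; [lra | lra | apply H0 |].
  eapply Rle_trans; [|apply (qpoch_Cnorm_ge C p k (1 / 2)); auto; lra].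
  apply exp_le_exp, Ropp_le_contravar. unfold Rdiv. apply Rmult_le_compat_r; auto.
  apply Rlt_le, Rinv_0_lt_compat, Rmult_lt_0_compat; lra.
Qed.

Lemma heine_sum_cv C : qpoch_regular C p -> Cnorm (Cdiv C (Cmul A B)) < 1 ->
  Ccv (fun N => Csum N (heine_term A B C p)) (heine_sum A B C p).
Proof.
  intros G Hz. destruct (heine_term_bound C G) as [K HK].
  destruct (Csum_ex_Ccv_geom _ K _ (conj (Cnorm_ge_0 _) Hz) HK) as [l Hl].
  unfold heine_sum. rewrite (Clim_correct _ l Hl). exact Hl.
Qed.

Lemma heine_term_cv_0 C : qpoch_regular C p -> Cnorm (Cdiv C (Cmul A B)) < 1 ->
  Ccv (heine_term A B C p) Cx0.
Proof.
  intros G Hz. destruct (heine_term_bound C G) as [K HK].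
  apply (Ccv_squeeze _ _ (fun n => K * Cnorm (Cdiv C (Cmul A B)) ^ n)).
  - intro n. replace (Csub (heine_term A B C p n) Cx0) with (heine_term A B C p n) by field.
    apply HK.
  - rewrite <- (Rmult_0_r K). apply (is_lim_seq_scal_l _ K 0), is_lim_seq_geom.
    rewrite Rabs_pos_eq; [exact Hz | apply Cnorm_ge_0].
Qed.

Lemma heine_sum_contiguous C : qpoch_regular C p -> Cnorm (Cdiv C (Cmul A B)) < 1 ->
  Cmul (Cmul (Csub Cx1 C) (Csub Cx1 (Cdiv C (Cmul A B)))) (heine_sum A B C p) =
  Cmul (Cmul (Csub Cx1 (Cdiv C A)) (Csub Cx1 (Cdiv C B))) (heine_sum A B (Cmul C (RtoC p)) p).
Proof.
  intros G Hz.
  assert (Hz' : Cnorm (Cdiv (Cmul C (RtoC p)) (Cmul A B)) < 1).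
  { replace (Cdiv (Cmul C (RtoC p)) (Cmul A B)) with (Cmul (Cdiv C (Cmul A B)) (RtoC p))
      by (field; auto).
    rewrite Cnorm_mult, Cnorm_RtoC, Rabs_pos_eq by lra.
    generalize (Cnorm_ge_0 (Cdiv C (Cmul A B))). nra. }
  assert (G' : qpoch_regular (Cmul C (RtoC p)) p).
  { assert (G1 := qpoch_regular_shift C p 1 G). rewrite pow_1 in G1. exact G1. }
  apply Csub_eq0.
  apply (Ccv_unique (fun M =>
    Csub (Cmul (Cmul (Csub Cx1 C) (Csub Cx1 (Cdiv C (Cmul A B)))) (Csum M (heine_term A B C p)))
         (Cmul (Cmul (Csub Cx1 (Cdiv C A)) (Csub Cx1 (Cdiv C B)))
               (Csum M (heine_term A B (Cmul C (RtoC p)) p))))).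
  - apply Ccv_minus; apply Ccv_mult; try apply Ccv_const; apply heine_sum_cv; auto.
  - eapply Ccv_ext; [intro M; symmetry; apply heine_partial_contiguous, G|].
    replace Cx0 with (Copp (Cmul (Cmul (Csub Cx1 C) (Csub Cx1 Cx0)) Cx0)) by field.
    apply Ccv_opp, Ccv_mult; [apply Ccv_mult; [apply Ccv_const|] | apply heine_term_cv_0; auto].
    apply Ccv_minus; [apply Ccv_const|].
    apply Ccv_is_lim_seq; split; [apply is_lim_seq_geom; rewrite Rabs_pos_eq; lra|].
    apply is_lim_seq_const.
Qed.

Lemma heine_sum_step C : qpoch_regular C p -> qpoch_regular (Cdiv C (Cmul A B)) p ->
  Cnorm (Cdiv C (Cmul A B)) < 1 ->
  heine_sum A B C p =
  Cmul (Cdiv (Cmul (Csub Cx1 (Cdiv C A)) (Csub Cx1 (Cdiv C B)))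
             (Cmul (Csub Cx1 C) (Csub Cx1 (Cdiv C (Cmul A B)))))
       (heine_sum A B (Cmul C (RtoC p)) p).
Proof.
  intros G Gz Hz.
  assert (H1 := qpoch_regular_1 C p G). assert (H2 := qpoch_regular_1 _ p Gz).
  set (X := Cmul (Csub Cx1 C) (Csub Cx1 (Cdiv C (Cmul A B)))).
  assert (HX : X <> Cx0) by (apply Cmul_neq0; auto).
  transitivity (Cdiv (Cmul X (heine_sum A B C p)) X); [field; exact HX|].
  unfold X at 1. rewrite heine_sum_contiguous by auto. field. auto.
Qed.

Lemma heine_sum_iter C m : qpoch_regular C p -> qpoch_regular (Cdiv C (Cmul A B)) p ->
  Cnorm (Cdiv C (Cmul A B)) < 1 ->
  heine_sum A B C p =
  Cmul (Cdiv (Cmul (qpoch (Cdiv C A) p m) (qpoch (Cdiv C B) p m))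
             (Cmul (qpoch C p m) (qpoch (Cdiv C (Cmul A B)) p m)))
       (heine_sum A B (Cmul C (RtoC (p ^ m))) p).
Proof.
  intros G Gz Hz. induction m as [|m IH].
  - unfold qpoch; cbn [Cprod pow]. change (RtoC 1) with Cx1.
    replace (Cmul C Cx1) with C by field. field. apply RtoC_neq0, R1_neq_R0.
  - assert (Hpm : 0 <= p ^ m <= 1) by (split; [apply pow_le | apply pow_le_1]; lra).
    assert (Hzm : Cnorm (Cdiv (Cmul C (RtoC (p ^ m))) (Cmul A B)) < 1).
    { rewrite Cdiv_mul_l, Cnorm_mult, Cnorm_RtoC, Rabs_pos_eq by lra.
      generalize (Cnorm_ge_0 (Cdiv C (Cmul A B))). nra. }
    assert (Gzm : qpoch_regular (Cdiv (Cmul C (RtoC (p ^ m))) (Cmul A B)) p)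
      by (rewrite Cdiv_mul_l; apply qpoch_regular_shift, Gz).
    rewrite IH, (heine_sum_step _ (qpoch_regular_shift C p m G) Gzm Hzm), !Cdiv_mul_l.
    replace (Cmul (Cmul C (RtoC (p ^ m))) (RtoC p)) with (Cmul C (RtoC (p ^ S m)))
      by (simpl; rewrite RtoC_mult; field).
    rewrite !qpoch_S.
    assert (N1 := qpoch_neq0 C p m G). assert (N2 := qpoch_neq0 _ p m Gz).
    assert (N3 := qpoch_regular_factor C p m G). assert (N4 := qpoch_regular_factor _ p m Gz).
    assert (N5 : Csub (Cmul A B) (Cmul C (RtoC (p ^ m))) <> Cx0).
    { replace (Csub (Cmul A B) (Cmul C (RtoC (p ^ m))))
        with (Cmul (Cmul A B) (Csub Cx1 (Cmul (Cdiv C (Cmul A B)) (RtoC (p ^ m)))))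
        by (field; auto).
      repeat apply Cmul_neq0; auto. }
    field. repeat split; auto.
Qed.

Lemma heine_sum_near_1 : exists K, 0 <= K /\ forall C, qpoch_regular C p -> Cnorm C <= 1 / 2 ->
  Cnorm (Cdiv C (Cmul A B)) < 1 ->
  Cnorm (Csub (heine_sum A B C p) Cx1)
  <= K * Cnorm (Cdiv C (Cmul A B)) / (1 - Cnorm (Cdiv C (Cmul A B))).
Proof.
  destruct heine_term_bound_unif as [K [HK0 HK]].
  exists K. split; [exact HK0|]. intros C G HC Hz.
  set (g := Cnorm (Cdiv C (Cmul A B))) in *. assert (Hg : 0 <= g) by apply Cnorm_ge_0.
  apply (Ccv_Cnorm_le _ _ _ _ 1 (heine_sum_cv C G Hz)).
  intros [|M] HM; [lia|].
  rewrite Csum_S_l, heine_term_0.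
  replace (Csub (Cadd Cx1 (Csum M (fun n => heine_term A B C p (S n)))) Cx1)
    with (Csum M (fun n => heine_term A B C p (S n))) by field.
  eapply Rle_trans; [apply (Csum_Cnorm_le_geom M _ (K * g) g); [lra|]|].
  - intro n. eapply Rle_trans; [apply (HK C (S n) HC)|]. fold g. simpl. lra.
  - assert (0 <= K * g * g ^ M) by (apply Rmult_le_pos; [nra | apply pow_le; lra]).
    unfold Rdiv. apply Rmult_le_compat_r; [apply Rlt_le, Rinv_0_lt_compat; lra | nra].
Qed.

Lemma heine_sum_shift_cv_1 C : qpoch_regular C p -> Cnorm (Cdiv C (Cmul A B)) < 1 ->
  Ccv (fun m => heine_sum A B (Cmul C (RtoC (p ^ m))) p) Cx1.
Proof.
  intros G Hz. destruct heine_sum_near_1 as [K [HK0 HK]].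
  destruct (qpoch_tail_small C p Hp) as [m0 Hm0].
  apply (Ccv_incr_n _ _ m0).
  set (g := Cnorm (Cdiv C (Cmul A B))) in *. assert (Hg : 0 <= g) by apply Cnorm_ge_0.
  apply (Ccv_squeeze _ _ (fun m => K * (g * p ^ (m + m0)) / (1 - g))).
  - intro m.
    assert (Hpm : 0 <= p ^ (m + m0) <= 1) by (split; [apply pow_le | apply pow_le_1]; lra).
    assert (Hx : Cnorm (Cdiv (Cmul C (RtoC (p ^ (m + m0)))) (Cmul A B)) = g * p ^ (m + m0)).
    { rewrite Cdiv_mul_l, Cnorm_mult, Cnorm_RtoC, Rabs_pos_eq by lra. reflexivity. }
    eapply Rle_trans; [apply HK|].
    + apply qpoch_regular_shift, G.
    + apply Hm0. lia.
    + rewrite Hx. nra.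
    + rewrite Hx. unfold Rdiv.
      apply Rmult_le_compat_l; [apply Rmult_le_pos; [|apply Rmult_le_pos]; lra|].
      apply Rinv_le_contravar; nra.
  - replace 0 with (K * (g * 0) / (1 - g)) by (field; lra).
    apply is_lim_seq_div'; [| apply is_lim_seq_const | lra].
    apply (is_lim_seq_scal_l _ K (g * 0)), (is_lim_seq_scal_l _ g 0).
    apply (is_lim_seq_incr_n (fun n => p ^ n) m0), is_lim_seq_geom.
    rewrite Rabs_pos_eq; lra.
Qed.

Theorem q_gauss_sum C : qpoch_regular C p -> qpoch_regular (Cdiv C (Cmul A B)) p ->
  Cnorm (Cdiv C (Cmul A B)) < 1 ->
  Ccv (fun N => Csum N (heine_term A B C p))
      (Cdiv (Cmul (qpoch_inf (Cdiv C A) p) (qpoch_inf (Cdiv C B) p))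
            (Cmul (qpoch_inf C p) (qpoch_inf (Cdiv C (Cmul A B)) p))).
Proof.
  intros G Gz Hz.
  assert (Hden : Cmul (qpoch_inf C p) (qpoch_inf (Cdiv C (Cmul A B)) p) <> Cx0)
    by (apply Cmul_neq0; apply qpoch_inf_neq0; auto).
  replace (Cdiv _ _) with (heine_sum A B C p); [apply heine_sum_cv; auto|].
  apply (Ccv_unique (fun m => heine_sum A B C p)); [apply Ccv_const|].
  eapply Ccv_ext; [intro m; symmetry; apply (heine_sum_iter C m G Gz Hz)|].
  match goal with |- Ccv _ ?L => replace L with (Cmul L Cx1) by ring end.
  apply Ccv_mult; [|apply heine_sum_shift_cv_1; auto].
  apply Ccv_div; [apply Ccv_mult | apply Ccv_mult | exact Hden]; apply qpoch_cv, Hp.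
Qed.

End HeineSeries.

(** * The q^2-gamma function *)

Definition q2pow (q : R) (x : Cx) : Cx := qpow q (Cmul (RtoC 2) x).

Lemma q2pow_plus q x y : q2pow q (Cadd x y) = Cmul (q2pow q x) (q2pow q y).
Proof. unfold q2pow. rewrite <- qpow_plus. f_equal. ring. Qed.

Lemma q2pow_INR q n : 0 < q -> q2pow q (RtoC (INR n)) = RtoC ((q ^ 2) ^ n).
Proof.
  intro Hq. unfold q2pow. rewrite <- RtoC_mult.
  replace (2 * INR n) with (INR (2 * n)) by (rewrite mult_INR; simpl; ring).
  rewrite qpow_INR, pow_mult by exact Hq. reflexivity.
Qed.

Lemma q2pow_eq_Cdiv q u x y : Cadd u y = x -> q2pow q u = Cdiv (q2pow q x) (q2pow q y).
Proof.
  intro E. rewrite <- E, q2pow_plus. field. apply qpow_neq0.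
Qed.

Lemma qGamma2_ok_regular q x : 0 < q -> qGamma2_ok q x -> qpoch_regular (q2pow q x) (q ^ 2).
Proof.
  intros Hq H k E. apply (H k).
  change (q2pow q (Cadd x (RtoC (INR k))) = Cx1).
  rewrite q2pow_plus, q2pow_INR by exact Hq. exact E.
Qed.

Lemma qGamma2_q2pow q x : qGamma2 q x =
  Cmul (Cdiv (qpoch_inf (RtoC (q ^ 2)) (q ^ 2)) (qpoch_inf (q2pow q x) (q ^ 2)))
       (qpow (1 - q ^ 2) (Csub Cx1 x)).
Proof. reflexivity. Qed.

Section QGamma.

Variable q : R.
Hypothesis Hq : 0 < q < 1.

Let Hp : 0 <= q ^ 2 < 1.
Proof. split; nra. Qed.

Let Gpp : qpoch_regular (RtoC (q ^ 2)) (q ^ 2).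
Proof. apply qpoch_regular_small; lra. Qed.

Let Hpp : qpoch_inf (RtoC (q ^ 2)) (q ^ 2) <> Cx0.
Proof. apply qpoch_inf_neq0; auto. Qed.

Lemma qGamma2_neq0 x : qGamma2_ok q x -> qGamma2 q x <> Cx0.
Proof.
  intro H. rewrite qGamma2_q2pow.
  apply Cmul_neq0; [apply Cdiv_neq0; [exact Hpp|] | apply qpow_neq0].
  apply qpoch_inf_neq0; [exact Hp | apply qGamma2_ok_regular; [lra | exact H]].
Qed.

Lemma qGamma2_shift_nat x n : qGamma2_ok q x ->
  qGamma2 q (Cadd x (RtoC (INR n))) =
  Cdiv (Cmul (qGamma2 q x) (qpoch (q2pow q x) (q ^ 2) n)) (RtoC ((1 - q ^ 2) ^ n)).
Proof.
  intro H. assert (G := qGamma2_ok_regular q x ltac:(lra) H).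
  rewrite !qGamma2_q2pow, q2pow_plus, q2pow_INR, (qpoch_inf_split (q2pow q x) _ n Hp) by lra.
  replace (Csub Cx1 (Cadd x (RtoC (INR n)))) with (Csub (Csub Cx1 x) (RtoC (INR n))) by ring.
  rewrite qpow_minus, qpow_INR by lra.
  assert (N1 := qpoch_neq0 _ _ n G).
  assert (N2 := qpoch_inf_neq0 _ _ Hp (qpoch_regular_shift _ _ n G)).
  assert (N3 : RtoC ((1 - q ^ 2) ^ n) <> Cx0) by (apply RtoC_neq0, pow_nonzero; lra).
  assert (N4 := qpow_neq0 (1 - q ^ 2) (Csub Cx1 x)).
  field. repeat split; auto.
Qed.

Lemma qfact2_qpoch n :
  RtoC (qfact2 q n) = Cdiv (qpoch (RtoC (q ^ 2)) (q ^ 2) n) (RtoC ((1 - q ^ 2) ^ n)).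
Proof.
  assert (H1 : 1 - q ^ 2 <> 0) by lra.
  induction n as [|n IHn]; cbn [qfact2].
  - unfold qpoch; cbn [Cprod pow]. change (RtoC 1) with Cx1. field. apply RtoC_neq0, R1_neq_R0.
  - assert (N := qpoch_neq0 _ _ n Gpp).
    assert (Hn : (1 - q ^ 2) ^ n <> 0) by (apply pow_nonzero; exact H1).
    replace (q ^ (2 * S n)) with (q ^ 2 * (q ^ 2) ^ n) by (rewrite pow_mult; reflexivity).
    replace ((1 - q ^ 2) ^ S n) with ((1 - q ^ 2) ^ n * (1 - q ^ 2)) by (simpl; ring).
    rewrite RtoC_mult, IHn, qpoch_S, RtoC_div, !RtoC_mult, !RtoC_minus, !RtoC_mult by exact H1.
    change (RtoC 1) with Cx1.
    assert (N1 : RtoC ((1 - q ^ 2) ^ n) <> Cx0) by (apply RtoC_neq0; exact Hn).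
    assert (N2 : Csub Cx1 (RtoC (q ^ 2)) <> Cx0)
      by (change Cx1 with (RtoC 1); rewrite <- RtoC_minus; apply RtoC_neq0; exact H1).
    field. auto.
Qed.

Lemma qGamma2_cross_ratio x y u v :
  qGamma2_ok q x -> qGamma2_ok q y -> qGamma2_ok q u -> qGamma2_ok q v -> Cadd x y = Cadd u v ->
  Cdiv (Cmul (qGamma2 q x) (qGamma2 q y)) (Cmul (qGamma2 q u) (qGamma2 q v)) =
  Cdiv (Cmul (qpoch_inf (q2pow q u) (q ^ 2)) (qpoch_inf (q2pow q v) (q ^ 2)))
       (Cmul (qpoch_inf (q2pow q x) (q ^ 2)) (qpoch_inf (q2pow q y) (q ^ 2))).
Proof.
  intros Hx Hy Hu Hv E.
  assert (Ne : forall z, qGamma2_ok q z -> qpoch_inf (q2pow q z) (q ^ 2) <> Cx0)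
    by (intros z Hz; apply qpoch_inf_neq0, qGamma2_ok_regular; auto; lra).
  assert (N1 := Ne x Hx). assert (N2 := Ne y Hy). assert (N3 := Ne u Hu). assert (N4 := Ne v Hv).
  assert (EQ : Cmul (qpow (1 - q ^ 2) (Csub Cx1 x)) (qpow (1 - q ^ 2) (Csub Cx1 y)) =
               Cmul (qpow (1 - q ^ 2) (Csub Cx1 u)) (qpow (1 - q ^ 2) (Csub Cx1 v))).
  { rewrite <- !qpow_plus. f_equal.
    replace (Cadd (Csub Cx1 x) (Csub Cx1 y)) with (Csub (Cadd Cx1 Cx1) (Cadd x y)) by ring.
    rewrite E. ring. }
  rewrite !qGamma2_q2pow.
  set (P := qpoch_inf (RtoC (q ^ 2)) (q ^ 2)).
  transitivity (Cdiv (Cmul (Cmul P P) (Cmul (qpow (1 - q ^ 2) (Csub Cx1 x)) (qpow (1 - q ^ 2) (Csub Cx1 y))))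
    (Cmul (Cmul (qpoch_inf (q2pow q x) (q ^ 2)) (qpoch_inf (q2pow q y) (q ^ 2)))
          (Cdiv (Cmul (Cmul P P) (Cmul (qpow (1 - q ^ 2) (Csub Cx1 u)) (qpow (1 - q ^ 2) (Csub Cx1 v))))
                (Cmul (qpoch_inf (q2pow q u) (q ^ 2)) (qpoch_inf (q2pow q v) (q ^ 2)))))).
  { field. repeat split; auto using qpow_neq0. }
  rewrite EQ. field. repeat split; auto using qpow_neq0.
Qed.

Lemma qGamma2_reflection x : qGamma2_ok q x -> qGamma2_ok q (Csub Cx1 x) ->
  Cmul (qpow q (Copp (Cmul x (Csub x Cx1)))) (Cdiv (sin_q q x) (pi_q q)) =
  Cinv (Cmul (qGamma2 q x) (qGamma2 q (Csub Cx1 x))).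
Proof.
  intros H1 H2. unfold sin_q, pi_q. rewrite !qGamma2_q2pow. fold (q2pow q x).
  replace (qpow q (Csub (RtoC 2) (Cmul (RtoC 2) x))) with (q2pow q (Csub Cx1 x))
    by (unfold q2pow; f_equal; ring).
  replace (Copp (Cmul x (Csub x Cx1)))
    with (Csub (RtoC (1 / 4)) (Cmul (Csub x (RtoC (1 / 2))) (Csub x (RtoC (1 / 2)))))
    by (apply Cx_ext; simpl; field).
  replace (Csub Cx1 (Csub Cx1 x)) with x by ring.
  replace (qpow (1 - q ^ 2) (Csub Cx1 x)) with (Cdiv (RtoC (1 - q ^ 2)) (qpow (1 - q ^ 2) x))
    by (rewrite qpow_minus; f_equal; change Cx1 with (RtoC 1); rewrite qpow_RtoC, Rpower_1 by lra;
        reflexivity).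
  rewrite qpow_minus, qpow_RtoC, RtoC_mult.
  assert (N1 := qpoch_inf_neq0 _ _ Hp (qGamma2_ok_regular q x ltac:(lra) H1)).
  assert (N2 := qpoch_inf_neq0 _ _ Hp (qGamma2_ok_regular q _ ltac:(lra) H2)).
  assert (N3 := qpoch_inf_neq0 (RtoC q) _ Hp (qpoch_regular_small q (q ^ 2) ltac:(lra) ltac:(lra))).
  assert (N4 : RtoC (Rpower q (1 / 4)) <> Cx0) by (apply RtoC_neq0, Rgt_not_eq, exp_pos).
  assert (N5 : RtoC (1 - q ^ 2) <> Cx0) by (apply RtoC_neq0; lra).
  assert (N6 := qpow_neq0 q (Cmul (Csub x (RtoC (1 / 2))) (Csub x (RtoC (1 / 2))))).
  assert (N7 := qpow_neq0 (1 - q ^ 2) x).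
  field. repeat split; auto.
Qed.

Lemma Cnorm_q2pow_lt_1 s : 0 < Re s -> Cnorm (q2pow q s) < 1.
Proof.
  intro Hs. unfold q2pow. rewrite Cnorm_qpow, <- exp_0. apply exp_increasing.
  assert (ln q < 0) by (rewrite <- ln_1; apply ln_increasing; lra).
  simpl. nra.
Qed.

Theorem qGamma2_gauss_sum x y w s t u :
  Cadd s (Cadd x y) = w -> Cadd t x = w -> Cadd u y = w -> 0 < Re s ->
  qGamma2_ok q w -> qGamma2_ok q s -> qGamma2_ok q t -> qGamma2_ok q u ->
  Ccv (fun N => Csum N (heine_term (q2pow q x) (q2pow q y) (q2pow q w) (q ^ 2)))
      (Cdiv (Cmul (qGamma2 q w) (qGamma2 q s)) (Cmul (qGamma2 q t) (qGamma2 q u))).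
Proof.
  intros Es Et Eu Hs Hw Hs' Ht Hu.
  assert (E : Cadd w s = Cadd t u).
  { replace t with (Csub w x) by (rewrite <- Et; ring).
    replace u with (Csub w y) by (rewrite <- Eu; ring).
    rewrite <- Es. ring. }
  rewrite qGamma2_cross_ratio by auto.
  assert (Ez : Cdiv (q2pow q w) (Cmul (q2pow q x) (q2pow q y)) = q2pow q s)
    by (rewrite <- q2pow_plus; symmetry; apply q2pow_eq_Cdiv, Es).
  rewrite (q2pow_eq_Cdiv q t w x Et), (q2pow_eq_Cdiv q u w y Eu), <- Ez.
  apply q_gauss_sum; try apply qpow_neq0; try exact Hp.
  - apply qGamma2_ok_regular; auto; lra.
  - rewrite Ez. apply qGamma2_ok_regular; auto; lra.
  - rewrite Ez. apply Cnorm_q2pow_lt_1, Hs.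
Qed.

Lemma summand_heine_term alpha a b c n :
  qGamma2_ok q alpha -> qGamma2_ok q (Csub Cx1 alpha) -> qGamma2_ok q (Cadd alpha a) ->
  qGamma2_ok q (Cadd (Csub Cx1 alpha) b) -> qGamma2_ok q (Cadd c Cx1) ->
  Cmul (Cdiv (Cmul (qshift2 q alpha (Cadd a (RtoC (INR n))))
                   (qshift2 q (Csub Cx1 alpha) (Cadd b (RtoC (INR n)))))
             (Cmul (RtoC (qfact2 q n)) (qGamma2 q (Cadd c (RtoC (INR n + 1))))))
       (qpow q (Cmul (RtoC (2 * INR n)) (Csub (Csub c a) b)))
  = Cmul (Cdiv (Cmul (qGamma2 q (Cadd alpha a)) (qGamma2 q (Cadd (Csub Cx1 alpha) b)))
               (Cmul (Cmul (qGamma2 q alpha) (qGamma2 q (Csub Cx1 alpha))) (qGamma2 q (Cadd c Cx1))))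
         (heine_term (q2pow q (Cadd alpha a)) (q2pow q (Cadd (Csub Cx1 alpha) b))
                     (q2pow q (Cadd c Cx1)) (q ^ 2) n).
Proof.
  intros H1 H2 Ha Hb Hc. unfold qshift2, heine_term.
  replace (Cadd alpha (Cadd a (RtoC (INR n)))) with (Cadd (Cadd alpha a) (RtoC (INR n))) by ring.
  replace (Cadd (Csub Cx1 alpha) (Cadd b (RtoC (INR n))))
    with (Cadd (Cadd (Csub Cx1 alpha) b) (RtoC (INR n))) by ring.
  replace (Cadd c (RtoC (INR n + 1))) with (Cadd (Cadd c Cx1) (RtoC (INR n)))
    by (rewrite RtoC_plus; change (RtoC 1) with Cx1; ring).
  rewrite !qGamma2_shift_nat, qfact2_qpoch by assumption.
  replace (Cmul (RtoC (2 * INR n)) (Csub (Csub c a) b))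
    with (Cmul (RtoC (INR n)) (Cmul (RtoC 2) (Csub (Csub c a) b))) by (rewrite RtoC_mult; ring).
  rewrite qpow_nat. fold (q2pow q (Csub (Csub c a) b)).
  rewrite (q2pow_eq_Cdiv q (Csub (Csub c a) b) (Cadd c Cx1)
             (Cadd (Cadd alpha a) (Cadd (Csub Cx1 alpha) b)))
    by ring.
  rewrite (q2pow_plus q (Cadd alpha a) (Cadd (Csub Cx1 alpha) b)).
  assert (Gpp' := qpoch_neq0 _ _ n Gpp).
  assert (GC := qpoch_neq0 _ _ n (qGamma2_ok_regular q _ ltac:(lra) Hc)).
  assert (N : RtoC ((1 - q ^ 2) ^ n) <> Cx0) by (apply RtoC_neq0, pow_nonzero; lra).
  assert (N1 := qGamma2_neq0 _ H1). assert (N2 := qGamma2_neq0 _ H2).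
  assert (N3 := qGamma2_neq0 _ Ha). assert (N4 := qGamma2_neq0 _ Hb).
  assert (N5 := qGamma2_neq0 _ Hc).
  field. repeat split; auto using qpow_neq0.
Qed.

Lemma rhs_gamma_form alpha a b c :
  qGamma2_ok q alpha -> qGamma2_ok q (Csub Cx1 alpha) -> qGamma2_ok q (Cadd c Cx1) ->
  qGamma2_ok q (Cadd (Csub Cx1 alpha) (Csub c a)) -> qGamma2_ok q (Cadd alpha (Csub c b)) ->
  Cmul (Cmul (Cdiv (Cmul (Cmul (qshift2 q alpha a) (qshift2 q (Csub Cx1 alpha) b))
                         (qGamma2 q (Csub (Csub c a) b)))
                   (Cmul (qshift2 q (Csub Cx1 alpha) (Csub c a)) (qshift2 q alpha (Csub c b))))
             (qpow q (Copp (Cmul alpha (Csub alpha Cx1)))))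
       (Cdiv (sin_q q alpha) (pi_q q))
  = Cmul (Cdiv (Cmul (qGamma2 q (Cadd alpha a)) (qGamma2 q (Cadd (Csub Cx1 alpha) b)))
               (Cmul (Cmul (qGamma2 q alpha) (qGamma2 q (Csub Cx1 alpha))) (qGamma2 q (Cadd c Cx1))))
         (Cdiv (Cmul (qGamma2 q (Cadd c Cx1)) (qGamma2 q (Csub (Csub c a) b)))
               (Cmul (qGamma2 q (Cadd (Csub Cx1 alpha) (Csub c a))) (qGamma2 q (Cadd alpha (Csub c b))))).
Proof.
  intros H1 H2 Hc Hca Hcb.
  match goal with |- Cmul (Cmul ?X ?Y) ?Z = _ => transitivity (Cmul X (Cmul Y Z)); [ring|] end.
  rewrite qGamma2_reflection by assumption. unfold qshift2.
  assert (N1 := qGamma2_neq0 _ H1). assert (N2 := qGamma2_neq0 _ H2).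
  assert (N3 := qGamma2_neq0 _ Hc). assert (N4 := qGamma2_neq0 _ Hca).
  assert (N5 := qGamma2_neq0 _ Hcb).
  field. repeat split; auto.
Qed.

End QGamma.

Theorem theorem1p1 (q : R) (alpha a b c : Cx) :
  0 < q -> q < 1 ->
  0 < Re (Csub (Csub c a) b) ->
  (forall n : nat, qGamma2_ok q (Cadd alpha (Cadd a (RtoC (INR n))))) ->
  (forall n : nat, qGamma2_ok q (Cadd (Csub Cx1 alpha) (Cadd b (RtoC (INR n))))) ->
  (forall n : nat, qGamma2_ok q (Cadd c (RtoC (INR n + 1)))) ->
  qGamma2_ok q alpha ->
  qGamma2_ok q (Csub Cx1 alpha) ->
  qGamma2_ok q (Csub (Csub c a) b) ->
  qGamma2_ok q (Cadd (Csub Cx1 alpha) (Csub c a)) ->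
  qGamma2_ok q (Cadd alpha (Csub c b)) ->
  Ccv (fun N => Csum N (fun n =>
         Cmul (Cdiv (Cmul (qshift2 q alpha (Cadd a (RtoC (INR n))))
                          (qshift2 q (Csub Cx1 alpha) (Cadd b (RtoC (INR n)))))
                    (Cmul (RtoC (qfact2 q n)) (qGamma2 q (Cadd c (RtoC (INR n + 1))))))
              (qpow q (Cmul (RtoC (2 * INR n)) (Csub (Csub c a) b)))))
      (Cmul (Cmul (Cdiv (Cmul (Cmul (qshift2 q alpha a) (qshift2 q (Csub Cx1 alpha) b))
                              (qGamma2 q (Csub (Csub c a) b)))
                        (Cmul (qshift2 q (Csub Cx1 alpha) (Csub c a)) (qshift2 q alpha (Csub c b))))
                  (qpow q (Copp (Cmul alpha (Csub alpha Cx1)))))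
            (Cdiv (sin_q q alpha) (pi_q q))).
Proof.
  intros Hq0 Hq1 Hre Ha Hb Hc Hal Hal' Hcab Hca Hcb.
  assert (Hq : 0 < q < 1) by lra.
  assert (Ha0 := Ha 0%nat). assert (Hb0 := Hb 0%nat). assert (Hc0 := Hc 0%nat).
  replace (Cadd a (RtoC (INR 0))) with a in Ha0 by (apply Cx_ext; simpl; ring).
  replace (Cadd b (RtoC (INR 0))) with b in Hb0 by (apply Cx_ext; simpl; ring).
  replace (RtoC (INR 0 + 1)) with Cx1 in Hc0 by (apply Cx_ext; simpl; ring).
  rewrite rhs_gamma_form by assumption.
  eapply Ccv_ext.
  { intro N. rewrite <- Csum_scal_l. apply Csum_ext. intro n.
    symmetry. apply summand_heine_term; assumption. }
  apply Ccv_mult; [apply Ccv_const|].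
  apply qGamma2_gauss_sum; try assumption; ring.
Qed.
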